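(* Let $S$ be a closed subspace of $\ell_\infty$ with $c_0\subseteq S$ such that the quotient $\ell_\infty/S$ is separable. Then $S$ is an $\ell_\infty$-Grothendieck subspace.
   Context: Let $S$ be a closed subspace of $\ell_\infty$ containing $c_0$ and let $j:c_0\to S$ be the inclusion map. Then $j^{**}:c_0^{**}\equiv\ell_\infty\to S^{**}$ identifies $\ell_\infty$ with a subspace of $S^{**}$ containing $S$. A sequence $(x_n^* )$ in $S^*$ is said to be $\sigma(S^*,\ell_\infty)$-convergent to $x^*\in S^*$ if $\langle j^{**}z,x_n^*\rangle\to\langle j^{**}z,x^*\rangle$ for every $z\in\ell_\infty$ (equivalently, the restrictions $j^*x_n^*\in\ell_1$ converge to $j^*x^*$ in the topology $\sigma(\ell_1,\ell_\infty)$). The closed subspace $S$ of $\ell_\infty$ is called an $\ell_\infty$-Grothendieck subspace if $c_0\subseteq S$ and every $\sigma(S^*,S)$-convergent (weak$^*$-convergent) sequence in $S^*$ is $\sigma(S^*,\ell_\infty)$-convergent (to the same limit). *)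

From HB Require Import structures.
From mathcomp Require Import all_boot all_order all_algebra.
From mathcomp Require Import all_classical all_reals all_analysis.
Set Implicit Arguments. Unset Strict Implicit. Unset Printing Implicit Defensive.
Import Order.TTheory GRing.Theory Num.Theory numFieldNormedType.Exports.
Local Open Scope classical_set_scope.
Local Open Scope ring_scope.

Section Defs.
Variable R : realType.

Definition linf : set (nat -> R) := [set x | exists M : R, forall n, `|x n| <= M].

Definition c0 : set (nat -> R) := [set x | x @ \oo --> (0 : R)].

Definition closed_subspace_linf (S : set (nat -> R)) : Prop :=
  [/\ S `<=` linf,
      S (fun _ => 0),
      (forall a (s t : nat -> R), S s -> S t -> S (fun n => a * s n + t n)) &
      (forall x, linf x ->
         (forall e : R, 0 < e -> exists2 s, S s & forall n, `|x n - s n| <= e) ->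
         S x)].

(* x^* is an element of S^*: a bounded linear functional on S
   (its values outside S are irrelevant) *)
Definition dual_elem (S : set (nat -> R)) (f : (nat -> R) -> R) : Prop :=
  (forall a (s t : nat -> R), S s -> S t ->
      f (fun n => a * s n + t n) = a * f s + f t) /\
  (exists C : R, forall s, S s -> forall M : R, (forall n, `|s n| <= M) ->
      `|f s| <= C * M).

Definition unit_vec (k : nat) : nat -> R := fun n => if n == k then 1 else 0.

(* <j** z, x^*> = <z, j^* x^*>, where j^* x^* in ell_1 = c_0^* is identified
   with the sequence (x^*(e_k))_k *)
Definition pair_linf (z : nat -> R) (f : (nat -> R) -> R) : R :=
  limn (series (fun k => z k * f (unit_vec k))).

Definition weak_star_cvg (S : set (nat -> R))
    (xs : nat -> (nat -> R) -> R) (x : (nat -> R) -> R) : Prop :=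
  forall s, S s -> (fun n => xs n s) @ \oo --> x s.

Definition sigma_linf_cvg
    (xs : nat -> (nat -> R) -> R) (x : (nat -> R) -> R) : Prop :=
  forall z, linf z -> (fun n => pair_linf z (xs n)) @ \oo --> pair_linf z x.

Definition linf_grothendieck (S : set (nat -> R)) : Prop :=
  closed_subspace_linf S /\ (forall x, c0 x -> S x) /\
  forall (xs : nat -> (nat -> R) -> R) (x : (nat -> R) -> R),
    (forall n, dual_elem S (xs n)) -> dual_elem S x ->
    weak_star_cvg S xs x -> sigma_linf_cvg xs x.

(* ell_infinity / S is separable (quotient norm): there is a countable D in
   ell_infinity whose classes are dense in the quotient *)
Definition quotient_separable (S : set (nat -> R)) : Prop :=
  exists D : set (nat -> R), countable D /\ D `<=` linf /\
    forall x, linf x -> forall e : R, 0 < e ->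
      exists d, D d /\ exists2 s, S s & forall n, `|x n - d n - s n| <= e.

End Defs.

From mathcomp Require Import all_boot all_order all_algebra.
From mathcomp Require Import all_classical all_reals all_analysis.
From mathcomp Require Import ring lra.
Set Implicit Arguments. Unset Strict Implicit. Unset Printing Implicit Defensive.
Import Order.TTheory GRing.Theory Num.Theory numFieldNormedType.Exports.
Local Open Scope classical_set_scope.
Local Open Scope ring_scope.

(* Put u_n := x_n^* - x^*. It is weak*-null, hence bounded by the uniform
   boundedness principle, and we must show sum_k z_k u_n(e_k) -> 0 for bounded z.
   If not, a gliding hump yields rows n_i and consecutive blocks F_i of coordinates
   with |u_{n_i}(z 1_{F_i})| large and u_{n_i} small on the coordinates before F_i.
   Splitting the later blocks into finitely many pieces, u_{n_i} hardly sees one of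
   them (Rosenthal's disjointness argument); iterating gives a diagonal sequence of
   block indices j_0 < j_1 < ... such that u_{n_{j_k}} hardly sees vectors living on
   the blocks F_{j_l}, l > k. Coding the finite prefixes of each b : nat -> bool
   along the diagonal gives uncountably many almost disjoint sets P_b of block
   indices and the vectors w_b = z 1_{U_{i in P_b} F_i}. Separability of l_inf/S
   yields b <> b' and s in S close to w_b - w_{b'}, and at the indices j in
   P_b \ P_{b'} beyond their common prefix |u_{n_j}(s)| >= eps/4, contradicting
   u_n(s) -> 0. *)

(** * Closed subspaces of l_inf and functionals on them *)

Definition bounded_by (R : realType) (s : nat -> R) (M : R) := forall k, `|s k| <= M.

Lemma bounded_by_ge0 (R : realType) (s : nat -> R) M : bounded_by s M -> 0 <= M.
Proof. by move=> h; apply: le_trans (h 0%N). Qed.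

Definition block_part (R : realType) (z : nat -> R) q q' k :=
  if (q <= k < q')%N then z k else 0.

Section Subspace.
Variables (R : realType) (S : set (nat -> R)).
Hypothesis hS : closed_subspace_linf S.

Lemma subspace0 : S (fun _ => 0).
Proof. by case: hS. Qed.

Lemma subspace_lin a s t : S s -> S t -> S (fun n => a * s n + t n).
Proof. by case: hS => _ _ H _; apply: H. Qed.

Lemma subspaceD s t : S s -> S t -> S (fun n => s n + t n).
Proof.
move=> Ss St; have := subspace_lin 1 Ss St.
by congr S; apply/funext => n; rewrite mul1r.
Qed.

Lemma subspaceZ a s : S s -> S (fun n => a * s n).
Proof.
move=> Ss; have := subspace_lin a Ss subspace0.
by congr S; apply/funext => n; rewrite addr0.
Qed.

Lemma subspaceB s t : S s -> S t -> S (fun n => s n - t n).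
Proof.
move=> Ss St; have := subspace_lin (-1) St Ss.
by congr S; apply/funext => n; rewrite mulN1r addrC.
Qed.

Lemma subspace_sum N (w : nat -> nat -> R) :
  (forall c, (c < N)%N -> S (w c)) -> S (fun k => \sum_(c < N) w c k).
Proof.
elim: N => [|N IH] hw.
  by under eq_fun do rewrite big_ord0; exact: subspace0.
under eq_fun do rewrite big_ord_recr /=.
by apply: subspaceD; [apply: IH => c /ltnW; apply: hw | exact: hw].
Qed.

(* [dual_elem S f] unfolds to [linear_on S f /\ exists C, dual_bound S f C]. *)
Definition linear_on (f : (nat -> R) -> R) := forall a s t, S s -> S t ->
  f (fun n => a * s n + t n) = a * f s + f t.

Definition dual_bound (f : (nat -> R) -> R) (C : R) :=
  forall s, S s -> forall M, bounded_by s M -> `|f s| <= C * M.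

Section LinearOn.
Variable f : (nat -> R) -> R.
Hypothesis hf : linear_on f.

Lemma linear_on0 : f (fun _ => 0) = 0.
Proof.
have := hf 1 subspace0 subspace0.
have -> : (fun n : nat => 1 * (0 : R) + 0) = (fun _ => 0).
  by apply/funext => n; rewrite mul1r addr0.
by rewrite mul1r => E; lra.
Qed.

Lemma linear_onD s t : S s -> S t -> f (fun n => s n + t n) = f s + f t.
Proof.
move=> Ss St; rewrite -[f s]mul1r -hf //.
by congr f; apply/funext => n; rewrite mul1r.
Qed.

Lemma linear_onZ a s : S s -> f (fun n => a * s n) = a * f s.
Proof.
move=> Ss; rewrite -[a * f s]addr0 -linear_on0 -hf //; last exact: subspace0.
by congr f; apply/funext => n; rewrite addr0.
Qed.

Lemma linear_onB s t : S s -> S t -> f (fun n => s n - t n) = f s - f t.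
Proof.
move=> Ss St; rewrite -[- f t]mulN1r addrC -hf //.
by congr f; apply/funext => n; rewrite mulN1r addrC.
Qed.

Lemma linear_on_sum N (w : nat -> nat -> R) : (forall c, (c < N)%N -> S (w c)) ->
  f (fun k => \sum_(c < N) w c k) = \sum_(c < N) f (w c).
Proof.
elim: N => [|N IH] hw.
  by under eq_fun do rewrite big_ord0; rewrite big_ord0 linear_on0.
have hw' c : (c < N)%N -> S (w c) by move/ltnW; exact: hw.
have SwN : S (w N) by exact: hw.
rewrite big_ord_recr /= -(IH hw') -(linear_onD (subspace_sum hw') SwN).
by congr f; apply/funext => k; rewrite big_ord_recr.
Qed.

End LinearOn.

Lemma dual_elemB f g : dual_elem S f -> dual_elem S g -> dual_elem S (fun s => f s - g s).
Proof.
move=> [lf [Cf hCf]] [lg [Cg hCg]]; split=> [a s t Ss St|].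
  by rewrite lf ?lg //; ring.
exists (Cf + Cg) => s Ss M hs.
by apply: le_trans (ler_normB _ _) _; rewrite mulrDl lerD ?hCf ?hCg.
Qed.

Section ContainsC0.
Hypothesis hc0 : forall x, c0 x -> S x.

Lemma finsupp_in (v : nat -> R) L : (forall k, (L <= k)%N -> v k = 0) -> S v.
Proof.
move=> H; apply: hc0; apply: cvg_near_cst.
by exists L => // n /= hn; apply: H.
Qed.

Lemma unit_vec_in k : S (unit_vec R k).
Proof.
apply: (@finsupp_in _ k.+1) => n hn; rewrite /unit_vec.
by case: eqP => // E; move: hn; rewrite E ltnn.
Qed.

Lemma block_part_in (v : nat -> R) q q' : S (block_part v q q').
Proof. by apply: (finsupp_in (L := q')) => k hk; rewrite /block_part ltnNge hk andbF. Qed.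

Lemma linear_on_finsupp f L (v : nat -> R) : linear_on f ->
  (forall k, (L <= k)%N -> v k = 0) -> f v = \sum_(k < L) v k * f (unit_vec R k).
Proof.
move=> hf hv; have -> : f v = f (fun n => \sum_(k < L) v k * unit_vec R k n).
  congr f; apply/funext => n; under eq_bigr => k _ do
    rewrite /unit_vec (eq_sym n) (fun_if (fun x => v k * x)) mulr1 mulr0.
  by rewrite -big_mkcond big_ord1_eq; case: ltnP => // /hv.
rewrite (linear_on_sum hf (w := fun k n => v k * unit_vec R k n)); last first.
  by move=> k _; apply: subspaceZ; exact: unit_vec_in.
by apply: eq_bigr => k _; rewrite linear_onZ //; exact: unit_vec_in.
Qed.

Lemma dual_unit_vec_summable f C : linear_on f -> dual_bound f C ->
  forall L, \sum_(k < L) `|f (unit_vec R k)| <= C.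
Proof.
move=> hf hC L.
pose v k := if (k < L)%N then Num.sg (f (unit_vec R k)) else 0.
have hv k : (L <= k)%N -> v k = 0 by rewrite /v ltnNge => ->.
have bv : bounded_by v 1.
  move=> k; rewrite /v; case: ifP => _; last by rewrite normr0.
  by rewrite normr_sg; case: (_ != 0).
have := hC _ (finsupp_in hv) 1 bv; rewrite mulr1 (linear_on_finsupp hf hv).
under eq_bigr => k _ do rewrite /v ltn_ord -normrEsg.
by apply: le_trans; apply: ler_norm.
Qed.

Lemma pair_series_cvg f C z B : linear_on f -> dual_bound f C -> bounded_by z B ->
  cvgn (series (fun k => z k * f (unit_vec R k))).
Proof.
move=> hf hC hz; have B0 := bounded_by_ge0 hz.
apply: normed_cvg; apply: nondecreasing_is_cvgn.
  by apply: nondecreasing_series => n _ _; exact: normr_ge0.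
exists (B * C) => _ [n _ <-] /=; rewrite /series /= big_mkord.
apply: le_trans (_ : \sum_(k < n) B * `|f (unit_vec R k)| <= _).
  by apply: ler_sum => i _; rewrite normrM ler_wpM2r.
by rewrite -mulr_sumr ler_wpM2l // (dual_unit_vec_summable hf hC).
Qed.

Lemma pair_linfB f g z B : dual_elem S f -> dual_elem S g -> bounded_by z B ->
  pair_linf z f - pair_linf z g =
    limn (series (fun k => z k * (f (unit_vec R k) - g (unit_vec R k)))).
Proof.
move=> [hf [Cf hCf]] [hg [Cg hCg]] hz; have := pair_series_cvg hf hCf hz.
have := pair_series_cvg hg hCg hz; move=> cvg_g cvg_f.
rewrite /pair_linf -lim_seriesB //.
by congr (limn (series _)); apply/funext => k; rewrite /= mulrBr.
Qed.

End ContainsC0.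

End Subspace.

(** * Uniform boundedness *)

Lemma geometric_limit (R : realType) (a : nat -> R) :
  (forall m, `|a m.+1 - a m| <= 3^-1 ^+ m) ->
  exists l, forall m, `|l - a m| <= 3/2 * 3^-1 ^+ m.
Proof.
move=> ha; pose lo m := a m - 3/2 * 3^-1 ^+ m; pose hi m := a m + 3/2 * 3^-1 ^+ m.
have r_step m : 3/2 * 3^-1 ^+ m - 3/2 * 3^-1 ^+ m.+1 = 3^-1 ^+ m :> R.
  by rewrite exprS; field.
have /nondecreasing_seqP lo_mono : forall m, lo m <= lo m.+1.
  move=> m; have := ha m; have := r_step m; rewrite /lo ler_norml => e /andP[h _].
  lra.
have /nonincreasing_seqP hi_mono : forall m, hi m.+1 <= hi m.
  move=> m; have := ha m; have := r_step m; rewrite /hi ler_norml => e /andP[_ h].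
  lra.
have lo_hi n m : lo n <= hi m.
  apply: le_trans (lo_mono _ _ (leq_maxl n m)) _.
  apply: le_trans (hi_mono _ _ (leq_maxr n m)).
  have : 0 <= 3/2 * 3^-1 ^+ maxn n m :> R by rewrite mulr_ge0 // exprn_ge0.
  rewrite /lo /hi; lra.
have Elo : has_sup (range lo).
  by split; [exists (lo 0%N), 0%N | exists (hi 0%N) => _ [n _ <-]].
exists (sup (range lo)) => m.
have hlo : lo m <= sup (range lo) by apply: sup_upper_bound => //; exists m.
have hhi : sup (range lo) <= hi m by apply: ge_sup; [case: Elo | move=> _ [n _ <-]].
by rewrite /lo /hi in hlo hhi; rewrite ler_norml; apply/andP; split; lra.
Qed.

Definition opnorm (R : realType) (S : set (nat -> R)) (f : (nat -> R) -> R) : R :=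
  sup [set `|f s| | s in [set s | S s /\ bounded_by s 1]].

Section OperatorNorm.
Variables (R : realType) (S : set (nat -> R)) (f : (nat -> R) -> R) (C : R).
Hypotheses (hS : closed_subspace_linf S) (hf : linear_on S f) (hC : dual_bound S f C).

Let unit_ball_values := [set `|f s| | s in [set s | S s /\ bounded_by s 1]].

Let zero_in_unit_ball : S (fun _ => 0) /\ bounded_by (fun _ : nat => 0 : R) 1.
Proof. by split; [exact: subspace0 | move=> k; rewrite normr0 ler01]. Qed.

Let unit_ball_has_sup : has_sup unit_ball_values.
Proof.
split; first by exists `|f (fun _ => 0)|, (fun _ => 0); last by [].
by exists C => _ [s [Ss bs] <-]; rewrite -[C]mulr1; exact: hC.
Qed.

Lemma opnorm_bound s M : S s -> bounded_by s M -> `|f s| <= opnorm S f * M.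
Proof.
move=> Ss bs; have M0 := bounded_by_ge0 bs.
have [M_eq0|Mn0] := eqVneq M 0.
  have -> : s = fun _ => 0.
    by apply/funext => k; apply/eqP; rewrite -normr_le0 -M_eq0; exact: bs.
  by rewrite (linear_on0 hS hf) normr0 M_eq0 mulr0.
have Mp : 0 < M by rewrite lt_def Mn0 M0.
have Ss' : S (fun k => M^-1 * s k) by exact: subspaceZ.
have : `|f (fun k => M^-1 * s k)| <= opnorm S f.
  apply: sup_upper_bound => //; exists (fun k => M^-1 * s k) => //; split => // k.
  by rewrite normrM ger0_norm ?invr_ge0 // ler_pdivrMl // mulr1.
by rewrite (linear_onZ hS hf _ Ss) normrM ger0_norm ?invr_ge0 // ler_pdivrMl // mulrC.
Qed.

Lemma opnorm_approx e : 0 < e ->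
  exists s, [/\ S s, bounded_by s 1 & opnorm S f - e < `|f s|].
Proof.
by move=> e0; have [_ [s [Ss bs] <-] h] := sup_adherent e0 unit_ball_has_sup; exists s.
Qed.

End OperatorNorm.

Section SignedSum.
Variables (R : realType) (S : set (nat -> R)).
Hypothesis hS : closed_subspace_linf S.
Variables (T : nat -> (nat -> R) -> R) (y : nat -> nat -> R).
Hypotheses (linT : forall m, linear_on S (T m)) (Sy : forall m, S (y m))
  (y_bounded : forall m, bounded_by (y m) 1).

Local Notation r := (3^-1 : R).

(* The sign of the m-th term is chosen so that [T m] of the partial sum is at
   least [T m] of that term (Sokal's proof of the uniform boundedness principle). *)
Fixpoint signed_sum m : nat -> R :=
  if m is m'.+1 then
    let x := signed_sum m' in
    let t := fun k => r ^+ m' * y m' k in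
    if `|T m' t| <= `|T m' (fun k => x k + t k)| then fun k => x k + t k
    else fun k => x k - t k
  else fun _ => 0.

Let term_in m : S (fun k => r ^+ m * y m k).
Proof. exact: subspaceZ. Qed.

Lemma signed_sum_in m : S (signed_sum m).
Proof.
elim: m => [|m IH] /=; first exact: subspace0.
by case: ifP => _; [apply: subspaceD | apply: subspaceB].
Qed.

Lemma signed_sum_step m k : `|signed_sum m.+1 k - signed_sum m k| <= r ^+ m.
Proof.
rewrite /=; case: ifP => _ /=;
  rewrite addrAC subrr add0r ?normrN normrM ger0_norm ?exprn_ge0 // -[leRHS]mulr1;
by apply: ler_wpM2l; [exact: exprn_ge0 | exact: y_bounded].
Qed.

Lemma signed_sum_large m : r ^+ m * `|T m (y m)| <= `|T m (signed_sum m.+1)|.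
Proof.
have Tt : T m (fun k => r ^+ m * y m k) = r ^+ m * T m (y m).
  by rewrite (linear_onZ hS (linT m)).
have Nt : `|r ^+ m * T m (y m)| = r ^+ m * `|T m (y m)|.
  by rewrite normrM ger0_norm // exprn_ge0.
rewrite /=; case: ifP => [|/negbT]; first by rewrite Tt Nt.
have [Sx St] := (signed_sum_in m, term_in m).
rewrite -ltNge -Nt (linear_onB (linT m) Sx St) (linear_onD (linT m) Sx St) Tt.
move: (T m _) (r ^+ m * _) => a b h.
have := ler_normB (a + b) (a - b).
have -> : a + b - (a - b) = b *+ 2 by rewrite mulr2n; ring.
by rewrite normrMn mulr2n; lra.
Qed.

Lemma signed_sum_limit :
  exists2 x, S x & forall m, bounded_by (fun k => x k - signed_sum m k) (3/2 * r ^+ m).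
Proof.
have [x hx] := choice (fun k => geometric_limit (fun m => signed_sum_step m k)).
exists x; last by move=> m k; exact: hx.
case: hS => _ _ _; apply.
  by exists (3/2) => k; have := hx k 0%N; rewrite /= subr0 expr0 mulr1.
move=> e e0; have r_lt1 : `|r| < 1 by rewrite ger0_norm // invf_lt1 // ltr1n.
have [m _ hm] := cvgr0_norm_lt _ (cvg_expr r_lt1) (e * 2 / 3) ltac:(lra).
exists (signed_sum m); first exact: signed_sum_in.
move=> k; apply: le_trans (hx k m) _; have := hm m (leqnn m).
by rewrite ger0_norm ?exprn_ge0 //; lra.
Qed.

End SignedSum.

Section UniformBoundedness.
Variables (R : realType) (S : set (nat -> R)) (u : nat -> (nat -> R) -> R).
Hypotheses (hS : closed_subspace_linf S) (hl : forall n, linear_on S (u n))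
  (hb : forall n, exists C, dual_bound S (u n) C).

Lemma opnorm_unbounded_witness : ~ (exists K, forall n, opnorm S (u n) <= K) ->
  exists2 x, S x & forall L, exists n, L < `|u n x|.
Proof.
move=> unbounded; have [C hC] := choice hb.
have exceeds K : exists n, K < opnorm S (u n).
  apply: contrapT => h; apply: unbounded; exists K => n.
  by rewrite leNgt; apply/negP => hn; apply: h; exists n.
have [nn large] := choice (fun m => exceeds (4 * 3 ^+ m * m.+1%:R)).
pose T m := u (nn m); pose N m := opnorm S (T m).
have N_gt0 m : 0 < N m by apply: lt_trans (large m); rewrite !mulr_gt0 ?exprn_gt0.
have [y hy] := choice (fun m =>
  opnorm_approx hS (hC (nn m)) (divr_gt0 (N_gt0 m) (ltr0n _ 4))).
have [Sy y_bounded] : (forall m, S (y m)) /\ forall m, bounded_by (y m) 1.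
  by split=> m; case: (hy m).
have linT m : linear_on S (T m) by exact: hl.
have [x Sx hx] := signed_sum_limit hS T Sy y_bounded.
exists x => // L; pose m := Num.truncn L; exists (nn m).
pose X := signed_sum T y m.+1; have SX : S X := signed_sum_in hS T Sy m.+1.
have SxX : S (fun k => x k - X k) by exact: subspaceB.
have -> : u (nn m) x = T m X + T m (fun k => x k - X k).
  by rewrite -(linear_onD (linT m) SX SxX); congr u; apply/funext => k; ring.
pose q := (3^-1 : R) ^+ m.
have q_gt0 : 0 < q by rewrite exprn_gt0 // invr_gt0.
have tail : `|T m (fun k => x k - X k)| <= q * N m / 2.
  apply: le_trans (opnorm_bound hS (linT m) (hC (nn m)) SxX (hx m.+1)) _.
  by rewrite exprSr -/q /N le_eqVlt; apply/orP; left; apply/eqP; field.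
have head := signed_sum_large hS linT Sy m.
have near_opnorm : q * (N m - N m / 4) < q * `|T m (y m)|.
  by rewrite ltr_pM2l //; case: (hy m).
have big_opnorm : 4 * m.+1%:R < q * N m.
  have -> : 4 * m.+1%:R = q * (4 * 3 ^+ m * m.+1%:R) :> R.
    by rewrite /q exprVn; field; rewrite expf_neq0.
  by rewrite ltr_pM2l.
have := truncnS_gt L; have := lerB_normD (T m X) (T m (fun k => x k - X k)).
rewrite -/q in head *; lra.
Qed.

Lemma uniform_boundedness : (forall s, S s -> exists L, forall n, `|u n s| <= L) ->
  exists2 K, 0 < K & forall n, dual_bound S (u n) K.
Proof.
move=> pointwise.
have [[K hK]|unbounded] := pselect (exists K, forall n, opnorm S (u n) <= K).
  exists (`|K| + 1) => [|n s Ss M hs]; first by have := normr_ge0 K; lra.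
  have [C hC] := hb n; apply: le_trans (opnorm_bound hS (hl n) hC Ss hs) _.
  apply: ler_wpM2r; first exact: bounded_by_ge0 hs.
  by have := ler_norm K; have := hK n; lra.
have [x Sx hx] := opnorm_unbounded_witness unbounded.
have [L hL] := pointwise x Sx; have [n] := hx L.
by rewrite ltNge hL.
Qed.

End UniformBoundedness.

(** * Gliding hump *)

Section HumpBlocks.
Variable g : nat * nat -> nat * nat.
Hypotheses (g_row : forall mq, (mq.1 < (g mq).1)%N)
  (g_block : forall mq, (mq.2 < (g mq).2)%N).

(* A state pairs the last row chosen with the start of the next block. *)
Fixpoint hump_state i := if i is i'.+1 then g (hump_state i') else (0%N, 0%N).

Definition block_start i := (hump_state i).2.
Definition hump_row i := (hump_state i.+1).1.
Definition in_block k i := (block_start i <= k < block_start i.+1)%N.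

Lemma block_start_mono : {mono block_start : i j / (i <= j)%N}.
Proof. by apply: leq_mono; apply: homo_ltn ltn_trans _ => i; exact: g_block. Qed.

Lemma hump_row_ge i : (i <= hump_row i)%N.
Proof. by elim: i => // i IH; apply: leq_ltn_trans IH (g_row _). Qed.

Lemma in_block_inj k i i' : in_block k i -> in_block k i' -> i = i'.
Proof.
have lt_mono := leqW_mono block_start_mono.
move=> /andP[a1 a2] /andP[b1 b2]; apply/eqP.
rewrite eqn_leq -ltnS -lt_mono (leq_ltn_trans a1 b2).
by rewrite -ltnS -lt_mono (leq_ltn_trans b1 a2).
Qed.

Lemma in_block_ge k i j : (block_start j <= k)%N -> in_block k i -> (j <= i)%N.
Proof.
by move=> hj /andP[_ a2]; rewrite -ltnS -(leqW_mono block_start_mono) (leq_ltn_trans hj a2).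
Qed.

End HumpBlocks.

Section GlidingHump.
Variables (R : realType) (a : nat -> nat -> R) (z : nat -> R) (V : nat -> R).
Variables (B eps gam : R).
Hypotheses (a_cvg0 : forall k, (fun n => a n k) @ \oo --> 0)
  (hV : forall n, series (fun k => z k * a n k) @ \oo --> V n)
  (V_large : forall N, exists n, (N <= n)%N /\ eps <= `|V n|)
  (hz : bounded_by z B) (eps_gt0 : 0 < eps) (gam_gt0 : 0 < gam).

Lemma head_sum_small q e : 0 < e ->
  exists N, forall n, (N <= n)%N -> \sum_(k < q) `|a n k| <= e.
Proof.
elim: q e => [|q IH] e e0; first by exists 0%N => n _; rewrite big_ord0 ltW.
have [N1 h1] := IH (e / 2) (divr_gt0 e0 (ltr0n _ 2)).
have [N2 _ h2] := cvgr0_norm_lt _ (@a_cvg0 q) (e / 2) (divr_gt0 e0 (ltr0n _ 2)).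
exists (maxn N1 N2) => n; rewrite geq_max => /andP[n1 n2].
by rewrite big_ord_recr /=; have := h1 n n1; have := h2 n n2; lra.
Qed.

Lemma hump_step m q : exists nq : nat * nat, [/\ (m < nq.1)%N, (q < nq.2)%N,
  \sum_(k < q) `|a nq.1 k| <= gam &
  3 * eps / 4 - B * gam <= `|\sum_(k < nq.2) block_part z q nq.2 k * a nq.1 k| ].
Proof.
have [N1 h1] := head_sum_small q gam_gt0.
have [n [hn hVn]] := V_large (maxn N1 m.+1).
move: hn; rewrite geq_max => /andP[n1 n2].
have [N2 _ h2] : \forall t \near \oo,
    `|V n - series (fun k => z k * a n k) t| < eps / 4.
  by move/cvgrPdist_lt: (@hV n); apply; exact: divr_gt0.
pose q' := maxn N2 q.+1; exists (n, q'); split => //=.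
- by rewrite leq_max ltnSn orbT.
- exact: h1.
have hq' : (q <= q')%N by rewrite leq_max leqnSn orbT.
have := h2 q' (leq_maxl _ _); rewrite /series /= big_mkord.
have -> : \sum_(k < q') z k * a n k =
    \sum_(k < q') block_part z q q' k * a n k + \sum_(k < q) z k * a n k.
  rewrite (big_ord_widen _ (fun k => z k * a n k) hq') [X in _ + X]big_mkcond.
  rewrite -big_split /=; apply: eq_bigr => k _; rewrite /block_part ltn_ord andbT.
  by case: leqP => _; rewrite ?mul0r ?add0r ?addr0.
have head : `|\sum_(k < q) z k * a n k| <= B * gam.
  apply: le_trans (ler_norm_sum _ _ _) _.
  apply: le_trans (_ : \sum_(k < q) B * `|a n k| <= _).
    by apply: ler_sum => k _; rewrite normrM ler_wpM2r.
  by rewrite -mulr_sumr ler_wpM2l ?(bounded_by_ge0 hz) ?h1.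
move: (\sum_(k < q') _) (\sum_(k < q) _) head => X Y head hXY.
have := ler_normD (V n - (X + Y)) (X + Y); have := ler_normD X Y.
by rewrite subrK; lra.
Qed.

Lemma exists_hump_blocks : exists g, [/\ forall mq, (mq.1 < (g mq).1)%N,
  forall mq, (mq.2 < (g mq).2)%N,
  forall i, \sum_(k < block_start g i) `|a (hump_row g i) k| <= gam &
  forall i, 3 * eps / 4 - B * gam <= `|\sum_(k < block_start g i.+1)
    block_part z (block_start g i) (block_start g i.+1) k * a (hump_row g i) k| ].
Proof.
have [g hg] := choice (fun mq : nat * nat => hump_step mq.1 mq.2).
exists g; split=> [mq|mq|i|i].
- by case: (hg mq).
- by case: (hg mq).
- by case: (hg (hump_state g i)).
- by case: (hg (hump_state g i)).
Qed.

End GlidingHump.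


(** * Disjointification along a diagonal *)

Lemma sum_le_except_one (R : realType) N (x : 'I_N -> R) (c0 : 'I_N) B e :
  0 <= e -> x c0 <= B -> (forall c, c != c0 -> x c <= e) ->
  \sum_c x c <= B + N%:R * e.
Proof.
move=> e0 xc0 xc; apply: le_trans (_ : \sum_c ((if c == c0 then B else 0) + e) <= _).
  apply: ler_sum => c _; case: eqVneq => [->|/xc]; last by rewrite add0r.
  by apply: le_trans xc0 _; rewrite lerDl.
by rewrite big_split /= -big_mkcond big_pred1_eq sumr_const card_ord mulr_natl.
Qed.

(* For [c < N] the pieces partition the range of [phi] except [phi 0], which is
   kept for the diagonal. *)
Definition piece N (phi : nat -> nat) c t := phi (N * t + c).+1.
Definition in_piece N phi c i := exists t, piece N phi c t = i.

Lemma in_piece_inj N phi c c' i : injective phi -> (c < N)%N -> (c' < N)%N ->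
  in_piece N phi c i -> in_piece N phi c' i -> c = c'.
Proof.
move=> iphi hc hc' [t <-] [t' /iphi [] /(congr1 (modn^~ N))].
by rewrite !(mulnC N) !modnMDl !modn_small.
Qed.

Section Pieces.
Variables (R : realType) (S : set (nat -> R)) (g : nat * nat -> nat * nat).
Variables (B eta delta : R) (f : (nat -> R) -> R).

Definition small_off_blocks (Q : nat -> Prop) (s : nat -> R) :=
  forall k, (forall i, in_block g k i -> ~ Q i) -> `|s k| <= eta.

Definition sees_only (Q : nat -> Prop) := forall s, S s -> bounded_by s B ->
  small_off_blocks Q s -> `|f s| <= delta.

Variables (K : R) (N : nat) (phi : nat -> nat).
Hypotheses (hS : closed_subspace_linf S) (hf : linear_on S f) (hK : dual_bound S f K).
Hypotheses (g_block : forall mq, (mq.2 < (g mq).2)%N) (iphi : injective phi).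
Hypotheses (eta_ge0 : 0 <= eta) (N_gt0 : (0 < N)%N).
Hypothesis budget : K * (B + N%:R * eta) < N%:R * delta.

Let at_most_one_piece k : exists c0 : 'I_N,
  forall c : 'I_N, c != c0 -> forall i, in_block g k i -> ~ in_piece N phi c i.
Proof.
have [[c0 [i0 [hi0 hq0]]]|none] :=
  pselect (exists c0 : 'I_N, exists i, in_block g k i /\ in_piece N phi c0 i).
  exists c0 => c ne i hi hq; move/eqP: ne; apply; apply: val_inj.
  by rewrite (in_block_inj g_block hi hi0) in hq; exact: (in_piece_inj iphi _ _ hq hq0).
by exists (Ordinal N_gt0) => c _ i hi hq; apply: none; exists c, i.
Qed.

Lemma exists_piece_seen_only : exists2 c, (c < N)%N & sees_only (in_piece N phi c).
Proof.
apply: contrapT => none.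
have bad c : exists s, (c < N)%N -> [/\ S s, bounded_by s B,
    small_off_blocks (in_piece N phi c) s & delta < `|f s|].
  have [hc|] := ltnP c N; last by exists (fun _ => 0).
  apply: contrapT => hs; apply: none; exists c => // s Ss bs small.
  by rewrite leNgt; apply/negP => hlt; apply: hs; exists s.
have [sc hsc] := choice bad.
pose w c k := Num.sg (f (sc c)) * sc c k.
have Sw c : (c < N)%N -> S (w c) by move=> hc; apply: subspaceZ; case: (hsc c hc).
pose s k := \sum_(c < N) w c k.
have fs : f s = \sum_(c < N) `|f (sc c)|.
  rewrite (linear_on_sum hS hf Sw); apply: eq_bigr => c _.
  by rewrite (linear_onZ hS hf) ?normrEsg //; case: (hsc c (ltn_ord c)).
have lower : N%:R * delta <= f s.
  rewrite fs; apply: le_trans (_ : \sum_(c < N) delta <= _).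
    by rewrite sumr_const card_ord mulr_natl.
  apply: ler_sum => c _.
  by case: (hsc c (ltn_ord c)) => _ _ _ /ltW.
have bs : bounded_by s (B + N%:R * eta).
  move=> k; have [c0 hc0] := at_most_one_piece k.
  have term c : `|w c k| <= `|sc c k|.
    by rewrite /w normrM -[leRHS]mul1r ler_wpM2r // normr_sg lern1 leq_b1.
  apply: le_trans (ler_norm_sum _ _ _) _.
  apply: (@sum_le_except_one _ _ (fun c => `|w c k|) c0 B eta eta_ge0) => [|c ne].
    by apply: le_trans (term c0) _; case: (hsc c0 (ltn_ord c0)).
  apply: le_trans (term c) _; case: (hsc c (ltn_ord c)) => _ _ small _.
  exact: small (hc0 c ne).
have Ss : S s := subspace_sum hS Sw.
have := le_lt_trans (le_trans (ler_norm _) (hK Ss bs)) budget.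
by rewrite ltNge lower.
Qed.

End Pieces.

Lemma piece_parameters (R : realType) (B K delta : R) : 0 < K -> 0 < delta ->
  exists eta N, [/\ 0 < eta, eta <= 1, (0 < N)%N & K * (B + N%:R * eta) < N%:R * delta].
Proof.
move=> K_gt0 delta_gt0; pose eta := Num.min 1 (delta / (4 * K)).
pose N := (Num.truncn (4 * K * B / delta)).+1.
exists eta, N; split => //; first by rewrite lt_min ltr01 /= !divr_gt0 // mulr_gt0.
  by rewrite ge_min lexx.
have : 4 * K * B < N%:R * delta by rewrite -ltr_pdivrMr ?truncnS_gt.
have K_eta : K * eta <= delta / 4.
  have : eta <= delta / (4 * K) by rewrite ge_min lexx orbT.
  by rewrite ler_pdivlMr ?mulr_gt0 //; lra.
have : N%:R * (K * eta) <= N%:R * (delta / 4) by rewrite ler_wpM2l.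
have : 0 <= N%:R * delta by rewrite mulr_ge0 // ltW.
lra.
Qed.

Section Diagonal.
Variables (N : nat) (choose_piece : (nat -> nat) -> nat).
Hypothesis N_gt0 : (0 < N)%N.

Fixpoint nested k : nat -> nat :=
  if k is k'.+1 then piece N (nested k') (choose_piece (nested k')) else id.

Definition nested_diag k := nested k 0.

Lemma nested_homo k : {homo nested k : a b / (a < b)%N}.
Proof.
elim: k => [//|k IH] a b hab /=; apply: IH.
by rewrite ltnS ltn_add2r ltn_pmul2l.
Qed.

Lemma nested_inj k : injective (nested k).
Proof. exact/incn_inj/leq_mono/nested_homo. Qed.

Lemma nested_diag_mono : {mono nested_diag : k l / (k < l)%N}.
Proof.
by apply/leqW_mono/leq_mono/(homo_ltn ltn_trans) => k; apply: nested_homo.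
Qed.

Lemma nested_diag_inj : injective nested_diag.
Proof. by apply/incn_inj/leq_mono/(homo_ltn ltn_trans) => k; apply: nested_homo. Qed.

Lemma nested_diag_ge l : (l <= nested_diag l)%N.
Proof. by elim: l => // l IH; rewrite (leq_ltn_trans IH) ?nested_diag_mono. Qed.

Lemma nested_diag_in_piece k l : (k < l)%N ->
  in_piece N (nested k) (choose_piece (nested k)) (nested_diag l).
Proof.
have shift d t : exists t', nested (k.+1 + d) t = nested k.+1 t'.
  elim: d t => [|d IH] t; first by exists t; rewrite addn0.
  by rewrite addnS /=; exact: IH.
move=> hkl; have [t e] := shift (l - k.+1)%N 0%N.
by exists t; rewrite /nested_diag -(subnKC hkl) e.
Qed.

End Diagonal.

(** * Almost disjoint branches *)

Lemma injective_unbounded (g : nat -> nat) : injective g ->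
  forall a N, exists t, (a <= t)%N /\ (N <= g t)%N.
Proof.
move=> ig a N; apply: contrapT => hn.
have small t : (g (a + t) < N)%N.
  by rewrite ltnNge; apply/negP => h; apply: hn; exists (a + t); rewrite leq_addr.
pose f (i : 'I_N.+1) : 'I_N := Ordinal (small i).
have : injective f by move=> i j /(congr1 val) /ig /addnI /val_inj.
by move/leq_card; rewrite !card_ord ltnn.
Qed.

Lemma bool_seq_not_injective (h : (nat -> bool) -> nat) :
  exists b b', b <> b' /\ h b = h b'.
Proof.
apply: contrapT => hn.
have ih : injective h.
  by move=> b b' E; apply: contrapT => ne; apply: hn; exists b, b'.
have inv n : exists b, (exists b', h b' = n) -> h b = n.
  have [[b' e]|ne] := pselect (exists b', h b' = n); first by exists b'.
  by exists (fun _ => false) => hb; case: ne.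
have [g hg] := choice inv.
pose d n := ~~ g n n.
have e : g (h d) = d by apply: ih; apply: hg; exists d.
by have := congr1 (fun f => f (h d)) e; rewrite /d; case: (g _ _).
Qed.

Lemma quotient_separable_close_pair (R : realType) (S : set (nat -> R))
    (w : (nat -> bool) -> nat -> R) B e :
  closed_subspace_linf S -> quotient_separable S ->
  (forall b, bounded_by (w b) B) -> 0 < e ->
  exists b b', b <> b' /\ exists2 s, S s & forall k, `|w b k - w b' k - s k| <= e.
Proof.
move=> hS [D [cD [_ hD]]] wB e0.
have approx b : exists ds : (nat -> R) * (nat -> R),
    [/\ D ds.1, S ds.2 & forall k, `|w b k - ds.1 k - ds.2 k| <= e / 2].
  have [|d [Dd [s Ss hs]]] := hD (w b) _ (e / 2) (divr_gt0 e0 (ltr0n _ 2)).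
    by exists B; exact: wB.
  by exists (d, s).
have [ds hds] := choice approx; have /countable_injP [f f_inj] := cD.
have [b [b' [nbb hbb]]] := bool_seq_not_injective (fun b => f (ds b).1).
have [[Db Sb hb] [Db' Sb' hb']] := (hds b, hds b').
have same_d : (ds b).1 = (ds b').1 by apply: f_inj; rewrite ?inE.
exists b, b'; split => //; exists (fun k => (ds b).2 k - (ds b').2 k).
  exact: subspaceB.
move=> k; have := hb k; have := hb' k; rewrite -same_d.
move: (w b k) (w b' k) ((ds b).1 k) ((ds b).2 k) ((ds b').2 k) => x x' d y y' h' h.
have := ler_normB (x - d - y) (x' - d - y').
have -> : x - d - y - (x' - d - y') = x - x' - (y - y') by ring.
lra.
Qed.

Definition prefix_code (b : nat -> bool) t := pickle (mkseq b t).

Lemma prefix_code_inj b : injective (prefix_code b).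
Proof. by move=> t t' /(pcan_inj pickleK) /(congr1 size); rewrite !size_mkseq. Qed.

Lemma prefix_code_eq b b' t t' :
  prefix_code b t = prefix_code b' t' -> forall d, (d < t)%N -> b d = b' d.
Proof.
move=> /(pcan_inj pickleK) e.
have tt' : t = t' by have := congr1 size e; rewrite !size_mkseq.
by subst t' => d hd; have := congr1 (fun l => nth false l d) e; rewrite !nth_mkseq.
Qed.

(** * The gliding hump contradiction *)

Section Phillips.
Variables (R : realType) (S : set (nat -> R)) (u : nat -> (nat -> R) -> R) (K : R).
Variables (z : nat -> R) (B : R).
Hypotheses (hS : closed_subspace_linf S) (hc0 : forall x, c0 x -> S x).
Hypotheses (linU : forall n, linear_on S (u n)) (hK : forall n, dual_bound S (u n) K).
Hypotheses (u_cvg0 : forall s, S s -> (fun n => u n s) @ \oo --> 0) (hz : bounded_by z B).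
Hypotheses (hq : quotient_separable S) (K_gt0 : 0 < K).

Section HumpContradiction.
Variables (eps gam : R) (g : nat * nat -> nat * nat).
Hypothesis eps_gt0 : 0 < eps.
Hypotheses (g_row : forall mq, (mq.1 < (g mq).1)%N)
  (g_block : forall mq, (mq.2 < (g mq).2)%N).
Hypothesis head_small : forall i,
  \sum_(k < block_start g i) `|u (hump_row g i) (unit_vec R k)| <= gam.
Hypothesis block_large : forall i, 3 * eps / 4 - B * gam <=
  `|\sum_(k < block_start g i.+1) block_part z (block_start g i) (block_start g i.+1) k
       * u (hump_row g i) (unit_vec R k)|.
Variables (eta delta : R) (N : nat) (cp : (nat -> nat) -> nat).
Hypotheses (eta_gt0 : 0 < eta) (eta_le1 : eta <= 1).
Hypothesis budget : eps / 4 <= 3 * eps / 4 - B * gam - (B + 1) * gam - delta.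
Hypothesis N_gt0 : (0 < N)%N.
Hypothesis seen_only : forall kk,
  sees_only S g (2 * B + 1) eta delta (u (hump_row g (nested_diag N cp kk)))
    (in_piece N (nested N cp kk) (cp (nested N cp kk))).

(* Two distinct branches share only the indices coded by their common prefixes. *)
Definition branch (b : nat -> bool) i := exists t, nested_diag N cp (prefix_code b t) = i.

Definition branch_vec b k :=
  if `[< exists i, in_block g k i /\ branch b i >] then z k else 0.

Lemma branch_vec_bounded b : bounded_by (branch_vec b) B.
Proof.
by move=> k; rewrite /branch_vec; case: ifP => _; rewrite ?normr0 ?(bounded_by_ge0 hz).
Qed.

Lemma branch_vec_dist b b' k : `|branch_vec b k - branch_vec b' k| <= B.
Proof.
have B0 := bounded_by_ge0 hz; rewrite /branch_vec.
by case: ifP => _; case: ifP => _; rewrite ?subrr ?subr0 ?sub0r ?normrN ?normr0.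
Qed.

Lemma branch_almost_disjoint b b' : b <> b' ->
  exists d, forall t, (d < t)%N -> ~ branch b' (nested_diag N cp (prefix_code b t)).
Proof.
move=> nbb; have [d hd] : exists d, b d <> b' d.
  apply: contrapT => h; apply: nbb; apply/funext => d.
  by apply: contrapT => hd; apply: h; exists d.
by exists d => t hdt [t' /(nested_diag_inj N_gt0) /esym /prefix_code_eq e]; exact/hd/e.
Qed.

Lemma head_bound i (v : nat -> R) C : (forall k, (block_start g i <= k)%N -> v k = 0) ->
  bounded_by v C -> `|u (hump_row g i) v| <= C * gam.
Proof.
move=> hv vC; rewrite (linear_on_finsupp hS hc0 (linU _) hv).
apply: le_trans (ler_norm_sum _ _ _) _.
apply: le_trans
  (_ : \sum_(k < block_start g i) C * `|u (hump_row g i) (unit_vec R k)| <= _).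
  by apply: ler_sum => k _; rewrite normrM ler_wpM2r.
by rewrite -mulr_sumr ler_wpM2l ?(bounded_by_ge0 vC).
Qed.

Section AtBranchPoint.
Variables (b b' : nat -> bool) (s : nat -> R) (t : nat).
Hypotheses (Ss : S s) (close : forall k, `|branch_vec b k - branch_vec b' k - s k| <= eta).
Local Notation kk := (prefix_code b t).
Local Notation j := (nested_diag N cp kk).
Hypothesis not_branch' : ~ branch b' j.
Local Notation p := (block_start g j).
Local Notation p' := (block_start g j.+1).
Local Notation tail := (fun k => s k - block_part z p p' k - block_part s 0 p k).

Lemma branch_point_bounded k : `|s k| <= B + eta.
Proof.
have := close k; have := branch_vec_dist b b' k; have := eta_le1.
move: (branch_vec b k - branch_vec b' k) (s k) => x y h1 h2.
by have := ler_normB x (x - y); rewrite opprB addrC subrK; lra.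
Qed.

Lemma branch_vec_beyond bb k : (p' <= k)%N ->
  (forall i, in_block g k i -> ~ in_piece N (nested N cp kk) (cp (nested N cp kk)) i) ->
  branch_vec bb k = 0.
Proof.
move=> hk off; rewrite /branch_vec asboolF // => -[i [hi [tt ei]]].
have ji : (j < i)%N.
  have /(in_block_ge g_block)/(_ hi) jle : (block_start g j <= k)%N.
    by apply: leq_trans hk; rewrite block_start_mono.
  rewrite ltn_neqAle jle andbT; apply/eqP => eji; move: hi; rewrite /in_block -eji.
  by rewrite ltnNge hk andbF.
apply: (off i hi); rewrite -ei; apply: nested_diag_in_piece.
by rewrite -(nested_diag_mono cp N_gt0) ei.
Qed.

Lemma tail_in : S tail.
Proof.
apply: (subspaceB hS (s := fun k => s k - block_part z p p' k)); last exact: block_part_in.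
exact: (subspaceB hS Ss (block_part_in hc0 _ _ _)).
Qed.

Lemma tail_small : `|u (hump_row g j) tail| <= delta.
Proof.
have B0 := bounded_by_ge0 hz; have [eta_le eta_pos] := (eta_le1, eta_gt0).
apply: seen_only.
- exact: tail_in.
- move=> k; rewrite /block_part leq0n /=; case: (ltnP k p) => hkp /=.
    by rewrite subr0 subrr normr0; lra.
  rewrite subr0; case: ifP => _; rewrite ?subr0.
    by apply: le_trans (ler_normB _ _) _; have := branch_point_bounded k; have := hz k; lra.
  by have := branch_point_bounded k; lra.
move=> k off; rewrite /block_part leq0n /=; case: (ltnP k p) => hkp /=.
  by rewrite subr0 subrr normr0 ltW.
rewrite subr0; case: (ltnP k p') => hkp' /=; last first.
  by have := close k; rewrite !branch_vec_beyond // subrr sub0r normrN subr0.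
have inj : in_block g k j by rewrite /in_block hkp hkp'.
have Eb : branch_vec b k = z k.
  by rewrite /branch_vec asboolT //; exists j; split => //; exists t.
have Eb' : branch_vec b' k = 0.
  rewrite /branch_vec asboolF // => -[i [hi hbi]].
  by apply: not_branch'; rewrite -(in_block_inj g_block hi inj).
by have := close k; rewrite Eb Eb' subr0 distrC.
Qed.

Lemma branch_point_large : eps / 4 <= `|u (hump_row g j) s|.
Proof.
have [Sz Sp] := (block_part_in hc0 z p p', block_part_in hc0 s 0 p).
have -> : u (hump_row g j) s = u (hump_row g j) (block_part z p p')
    + (u (hump_row g j) (block_part s 0 p) + u (hump_row g j) tail).
  rewrite -(linear_onD (linU _) Sp tail_in).
  rewrite -(linear_onD (linU _) Sz (subspaceD hS Sp tail_in)).
  by congr u; apply/funext => k; ring.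
have block : 3 * eps / 4 - B * gam <= `|u (hump_row g j) (block_part z p p')|.
  rewrite (linear_on_finsupp hS hc0 (linU _) (L := p')) ?block_large //.
  by move=> k hk; rewrite /block_part ltnNge hk andbF.
have head : `|u (hump_row g j) (block_part s 0 p)| <= (B + 1) * gam.
  apply: head_bound => [k hk|k]; first by rewrite /block_part ltnNge hk andbF.
  rewrite /block_part; case: ifP => _.
    by have := branch_point_bounded k; have := eta_le1; lra.
  by rewrite normr0; have := bounded_by_ge0 hz; lra.
have := tail_small; have := budget.
move: (u _ (block_part z p p')) (u _ (block_part s 0 p)) (u _ tail) block head => x y w.
have := ler_normD y w; have := lerB_normD x (y + w); lra.
Qed.

End AtBranchPoint.

Lemma hump_contradiction : False.
Proof.
have [b [b' [nbb [s Ss close]]]] :=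
  quotient_separable_close_pair hS hq branch_vec_bounded eta_gt0.
have [d far] := branch_almost_disjoint nbb.
have [N0 _ small] := cvgr0_norm_lt _ (u_cvg0 Ss) (eps / 4) (divr_gt0 eps_gt0 (ltr0n _ 4)).
have [t [hdt hNt]] := injective_unbounded (@prefix_code_inj b) d.+1 N0.
have := branch_point_large Ss close (far t hdt).
have /small : (N0 <= hump_row g (nested_diag N cp (prefix_code b t)))%N.
  exact: leq_trans hNt (leq_trans (nested_diag_ge cp N_gt0 _) (hump_row_ge g_row _)).
by move=> lt /(lt_le_trans lt); rewrite ltxx.
Qed.

End HumpContradiction.

Lemma pair_series_cvg0 :
  (fun n => limn (series (fun k => z k * u n (unit_vec R k)))) @ \oo --> 0.
Proof.
apply/cvgrPdist_lt => eps eps_gt0; apply: contrapT => not_near.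
pose a n k := u n (unit_vec R k); pose V n := limn (series (fun k => z k * a n k)).
have V_large N : exists n, (N <= n)%N /\ eps <= `|V n|.
  apply: contrapT => h; apply: not_near; exists N => // n /= hn.
  by rewrite sub0r normrN ltNge; apply/negP => hV; apply: h; exists n.
have a_cvg0 k : (fun n => a n k) @ \oo --> 0 := u_cvg0 (unit_vec_in hc0 k).
have hV n : series (fun k => z k * a n k) @ \oo --> V n.
  exact: (pair_series_cvg hS hc0 (linU n) (hK n) hz).
have B0 := bounded_by_ge0 hz.
pose gam := eps / (4 * (2 * B + 1)).
have gam_gt0 : 0 < gam by apply: divr_gt0 => //; lra.
have [g [g_row g_block head_small block_large]] :=
  exists_hump_blocks a_cvg0 hV V_large hz eps_gt0 gam_gt0.
pose delta := eps / 4; have delta_gt0 : 0 < delta by rewrite divr_gt0.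
have [eta [N [eta_gt0 eta_le1 N_gt0 piece_budget]]] :=
  piece_parameters (2 * B + 1) K_gt0 delta_gt0.
have cp_spec phi : exists c, injective phi ->
    sees_only S g (2 * B + 1) eta delta (u (hump_row g (phi 0%N))) (in_piece N phi c).
  have [iphi|] := pselect (injective phi); last by exists 0%N.
  have [c _ hc] := exists_piece_seen_only hS (linU (hump_row g (phi 0%N))) (hK _)
    g_block iphi (ltW eta_gt0) N_gt0 piece_budget.
  by exists c.
have [cp hcp] := choice cp_spec.
have budget : eps / 4 <= 3 * eps / 4 - B * gam - (B + 1) * gam - delta.
  suff -> : 3 * eps / 4 - B * gam - (B + 1) * gam - delta = eps / 4 by [].
  by rewrite /delta /gam; field; lra.
have seen_only kk :
    sees_only S g (2 * B + 1) eta delta (u (hump_row g (nested_diag N cp kk)))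
    (in_piece N (nested N cp kk) (cp (nested N cp kk))).
  by apply: (hcp (nested N cp kk)); apply: nested_inj.
exact: (hump_contradiction eps_gt0 g_row g_block head_small block_large eta_gt0 eta_le1
  budget N_gt0 seen_only).
Qed.

End Phillips.

Theorem corollary3p2 (R : realType) (S : set (nat -> R)) :
  closed_subspace_linf S -> (forall x, c0 x -> S x) -> quotient_separable S ->
  linf_grothendieck S.
Proof.
move=> hS hc0 hq; split=> //; split=> // xs x hxs hx hw z [Bz hz].
pose u n s := xs n s - x s.
have [linU boundU] :
    (forall n, linear_on S (u n)) /\ forall n, exists C, dual_bound S (u n) C.
  by split=> n; case: (dual_elemB (hxs n) hx).
have u_cvg0 s : S s -> (fun n => u n s) @ \oo --> 0.
  by move=> Ss; apply/subr_cvg0; exact: hw.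
have pointwise s : S s -> exists L, forall n, `|u n s| <= L.
  move=> Ss; have /cvg_has_ub [L hL] : cvgn (fun n => u n s).
    by apply/cvg_ex; exists 0; exact: u_cvg0.
  by exists L => n; apply: hL; exists n.
have [K K_gt0 hK] := uniform_boundedness hS linU boundU pointwise.
apply/subr_cvg0; under eq_fun => n do rewrite (pair_linfB hS hc0 (hxs n) hx hz).
exact: pair_series_cvg0 hS hc0 linU hK u_cvg0 hz hq K_gt0.
Qed.
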